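(* Let $\Omega=\bigcup_{k=1}^K\Omega_k$ be a partition of a domain $\Omega$, and let $X$, $Y$, $Z$, $V$, the linear operators $A:X\to Y$, $B:X\to Z$, the data $f\in Y$, $g\in Z$, and the orthonormal bases $\{\Phi_{k,i}\}_{i\ge1}$ of $Y|_{\Omega_k}$ be as in the context. Assume the problem $Au=f$ in $\Omega$, $Bu=g$ on $\partial\Omega$ has a unique solution $u^*\in V$ with an approximating sequence $\{u_n^*\}\subset X$, and assume the norm relation: there are constants $C_1,C_2>0$ such that $C_1\|v\|_V\le\|Av\|_Y+\|Bv\|_Z\le C_2\|v\|_X$ for all $v\in X$. For $k=1,\dots,K$ let $G_k$ be a compact subset of $Y|_{\Omega_k}$ containing $\{(Au_n^*-f)|_{\Omega_k}\}_{n\ge1}$ and let $\tilde V_K=\{v\in X:(Av-f)|_{\Omega_k}\in G_k,\ k=1,\dots,K\}$. Let $\epsilon>0$ and let $\mathbf N_{\epsilon,K}=(N_{\epsilon,1},\dots,N_{\epsilon,K})$ be integers such that $\mathcal J_\tau^{h,\mathbf N_{\epsilon,K}}(v)\ge\mathcal J_\tau(v)-\epsilon$ for all $v\in\tilde V_K$ (such integers exist). Fix $\tau\ge1$. Let $\{\mathfrak N_{\theta,n}\}_{n\ge1}$ be a sequence of function classes (neural network classes), let $\delta_n\to0$, and let $u_n\in\mathfrak N_{\theta,n}\cap\tilde V_K$ be a quasi-minimizer, i.e. $$\mathcal J_\tau^{h,\mathbf N_{\epsilon,K}}(u_n)\le\inf_{w\in\mathfrak N_{\theta,n}\cap\tilde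 V_K}\mathcal J_\tau^{h,\mathbf N_{\epsilon,K}}(w)+\delta_n .$$ Then $$\|u_n-u^*\|_V\le\sqrt2\,C_1^{-1}\Big(\mathcal J_\tau^{h,\mathbf N_{\epsilon,K}}(u_n)+\delta_n+\epsilon\Big)^{1/2}.$$
   Context: Setting: $X$ is a space of functions on $\Omega$ contained in a normed space $V$; $Y$ is a Hilbert space of functions on $\Omega$ and $Y|_{\Omega_k}$ denotes the Hilbert space with the same structure over $\Omega_k$, with $\|w\|_Y^2=\sum_{k=1}^K\|w|_{\Omega_k}\|_{Y|_{\Omega_k}}^2$ (e.g. $Y=L^2$); $Z$ is a normed space of functions on $\partial\Omega$. For each $k$, $\{\Phi_{k,i}\}_{i\ge1}$ is a complete orthonormal basis of $Y|_{\Omega_k}$, and $(w,\Phi_{k,i})_Y$ is the $Y|_{\Omega_k}$ inner product of $w|_{\Omega_k}$ with $\Phi_{k,i}$. Loss functionals: $\mathcal J_\tau(v)=\|f-Av\|_Y^2+\tau\|Bv-g\|_Z^2$ and, for $\mathbf N=(N_1,\dots,N_K)$, $\mathcal J_\tau^{h,\mathbf N}(v)=\sum_{k=1}^K\sum_{i=1}^{N_k}(f-Av,\Phi_{k,i})_Y^2+\tau\|Bv-g\|_Z^2$. Solution concept: $u^*\in V$ is a solution if there is a sequence $\{u_n^*\}\subset X$ (an approximating sequence) with $\|u_n^*-u^*\|_V\to0$ and $\|Au_n^*-f\|_Y+\|Bu_n^*-g\|_Z\to0$. *)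

From HB Require Import structures.
From mathcomp Require Import all_boot all_order all_algebra.
From mathcomp Require Import all_classical all_reals all_analysis.
Set Implicit Arguments. Unset Strict Implicit. Unset Printing Implicit Defensive.
Import Order.TTheory GRing.Theory Num.Theory.
Import numFieldNormedType.Exports.
Local Open Scope classical_set_scope.
Local Open Scope ring_scope.

Definition inner_product_of {R : realType} (E : normedModType R)
  (ip : E -> E -> R) : Prop :=
  [/\ (forall x y, ip x y = ip y x),
      (forall (a : R) x y z, ip (a *: x + y) z = a * ip x z + ip y z)
    & (forall x, ip x x = `|x| ^+ 2)].

Definition hilbert_space {R : realType} (E : completeNormedModType R)
  (ip : E -> E -> R) : Prop := inner_product_of ip.

Definition complete_orthonormal_basis {R : realType} (E : normedModType R)
  (ip : E -> E -> R) (Phi : nat -> E) : Prop :=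
  (forall i j, ip (Phi i) (Phi j) = (i == j)%:R) /\
  (forall w : E, (fun n => \sum_(i < n) ip w (Phi i) *: Phi i) @ \oo --> w).

Definition J_tau {R : realType} (X Y Z : normedModType R)
  (A : X -> Y) (B : X -> Z) (f : Y) (g : Z) (tau : R) (v : X) : R :=
  `|f - A v| ^+ 2 + tau * `|B v - g| ^+ 2.

(* J_tau^{h,N}(v) = sum_k sum_{i <= N_k} (f - Av, Phi_{k,i})^2 + tau ||Bv - g||^2;
   the basis index i >= 1 of the paper is shifted to i >= 0 *)
Definition J_tau_hN {R : realType} (K : nat) (X Y Z : normedModType R)
  (Yk : 'I_K -> normedModType R) (ipk : forall k, Yk k -> Yk k -> R)
  (res : forall k, Y -> Yk k) (Phi : forall k, nat -> Yk k) (N : 'I_K -> nat)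
  (A : X -> Y) (B : X -> Z) (f : Y) (g : Z) (tau : R) (v : X) : R :=
  \sum_(k < K) \sum_(i < N k) (ipk k (res k (f - A v)) (Phi k i)) ^+ 2
  + tau * `|B v - g| ^+ 2.

(* us is an approximating sequence for w (j : X -> V is the inclusion) *)
Definition approximating_seq {R : realType} (X V Y Z : normedModType R)
  (j : X -> V) (A : X -> Y) (B : X -> Z) (f : Y) (g : Z)
  (w : V) (us : nat -> X) : Prop :=
  (fun n => `|j (us n) - w|) @ \oo --> (0 : R) /\
  (fun n => `|A (us n) - f| + `|B (us n) - g|) @ \oo --> (0 : R).

Definition is_solution {R : realType} (X V Y Z : normedModType R)
  (j : X -> V) (A : X -> Y) (B : X -> Z) (f : Y) (g : Z) (w : V) : Prop :=
  exists us : nat -> X, approximating_seq j A B f g w us.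

Definition tildeV {R : realType} (K : nat) (X Y : normedModType R)
  (Yk : 'I_K -> normedModType R) (res : forall k, Y -> Yk k)
  (G : forall k, set (Yk k)) (A : X -> Y) (f : Y) : set X :=
  [set v | forall k : 'I_K, G k (res k (A v - f))].

From HB Require Import structures.
From mathcomp Require Import all_boot all_order all_algebra.
From mathcomp Require Import all_classical all_reals all_analysis.
From mathcomp Require Import lra.
Set Implicit Arguments. Unset Strict Implicit. Unset Printing Implicit Defensive.
Import Order.TTheory GRing.Theory Num.Theory.
Import numFieldNormedType.Exports.
Local Open Scope classical_set_scope.
Local Open Scope ring_scope.

(* The lower norm relation C1 |v|_V <= |Av| + |Bv|, applied to v - u*_m and
   passed to the limit along the approximating sequence, bounds the error of
   any v by its residuals.  Since J^{h,N} is within eps of J_tau on tilde V_K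
   and a quasi-minimizer has nonnegative slack delta_n, the residuals of u_n
   are controlled by J^{h,N}(u_n) + delta_n + eps, the factor sqrt 2 coming
   from (a + b)^2 <= 2 (a^2 + b^2) and tau >= 1.  Uniqueness, compactness and
   the Hilbert structure only serve to make such N exist; the estimate itself
   does not use them. *)

Lemma ler_add_cvg0 (R : realType) (x y : R) (e : nat -> R) :
  e @ \oo --> 0 -> (forall m, x <= y + e m) -> x <= y.
Proof.
move=> e0 xle.
have ye : (fun m => y + e m) @ \oo --> y.
  by rewrite -[X in _ --> X]addr0; apply: cvgD => //; exact: cvg_cst.
rewrite -(cvg_lim _ ye) //; apply: limr_ge; first by apply/cvg_ex; exists y.
by near=> m; apply: xle.
Unshelve. all: by end_near.
Qed.

Lemma normD_le_sqrt_sqr (R : rcfType) (a b : R) :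
  0 <= a -> 0 <= b -> a + b <= Num.sqrt (2 * (a ^+ 2 + b ^+ 2)).
Proof.
move=> a0 b0; rewrite -[a + b]ger0_norm ?addr_ge0 // -sqrtr_sqr ler_sqrt; last first.
  by rewrite mulr_ge0 ?addr_ge0 ?sqr_ge0.
by have := sqr_ge0 (a - b); rewrite sqrrB sqrrD; lra.
Qed.

Lemma inf_le_add_ge0 (R : realType) (S : set R) (x d : R) :
  has_lbound S -> S x -> x <= inf S + d -> 0 <= d.
Proof. by move=> lbS Sx; have := ge_inf lbS Sx; lra. Qed.

Lemma normB_residual (R : numDomainType) (U W : normedModType R)
  (L : {linear U -> W}) (h : W) (v w : U) :
  `|L (v - w)| <= `|L v - h| + `|L w - h|.
Proof.
have -> : L (v - w) = (L v - h) - (L w - h) by rewrite linearB opprB addrA subrK.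
exact: ler_normB.
Qed.

Section Residuals.
Variables (R : realType) (X V Y Z : normedModType R).
Variables (j : {linear X -> V}) (A : {linear X -> Y}) (B : {linear X -> Z}).
Variables (f : Y) (g : Z).

Lemma dist_solution_le_residuals (ustar : V) (ustars : nat -> X) (C1 : R) :
  approximating_seq j A B f g ustar ustars -> 0 <= C1 ->
  (forall v, C1 * `|j v| <= `|A v| + `|B v|) ->
  forall v, C1 * `|j v - ustar| <= `|A v - f| + `|B v - g|.
Proof.
move=> [jcvg rcvg] C1ge0 lowerC1 v.
apply: (@ler_add_cvg0 _ _ _ (fun m =>
  (`|A (ustars m) - f| + `|B (ustars m) - g|) + C1 * `|j (ustars m) - ustar|)).
  rewrite -[X in _ --> X]addr0; apply: cvgD => //.
  by rewrite -(mulr0 C1); apply: cvgM => //; exact: cvg_cst.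
move=> m.
have tri : C1 * `|j v - ustar| <=
    C1 * `|j (v - ustars m)| + C1 * `|j (ustars m) - ustar|.
  by rewrite -mulrDr ler_wpM2l // linearB /= ler_distD.
have := lowerC1 (v - ustars m).
have := normB_residual A f v (ustars m).
have := normB_residual B g v (ustars m).
lra.
Qed.

Lemma residuals_le_sqrt_J_tau (tau : R) (v : X) : 1 <= tau ->
  `|A v - f| + `|B v - g| <= Num.sqrt (2 * J_tau A B f g tau v).
Proof.
move=> tau1; apply: le_trans (normD_le_sqrt_sqr (normr_ge0 _) (normr_ge0 _)) _.
have b2 : 0 <= `|B v - g| ^+ 2 by rewrite sqr_ge0.
rewrite ler_sqrt; last by rewrite mulr_ge0 // /J_tau addr_ge0 ?sqr_ge0 ?mulr_ge0 //; lra.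
rewrite ler_pM2l // /J_tau distrC lerD2l.
by rewrite ler_peMl.
Qed.

End Residuals.

Lemma J_tau_hN_ge0 (R : realType) (K : nat) (X Y Z : normedModType R)
  (Yk : 'I_K -> normedModType R) (ipk : forall k, Yk k -> Yk k -> R)
  (res : forall k, Y -> Yk k) (Phi : forall k, nat -> Yk k) (N : 'I_K -> nat)
  (A : X -> Y) (B : X -> Z) (f : Y) (g : Z) (tau : R) (v : X) :
  0 <= tau -> 0 <= J_tau_hN ipk res Phi N A B f g tau v.
Proof.
move=> tau0; rewrite /J_tau_hN addr_ge0 ?mulr_ge0 ?sqr_ge0 //.
by apply: sumr_ge0 => k _; apply: sumr_ge0 => i _; apply: sqr_ge0.
Qed.

Theorem mainTheorem2 (R : realType) (K : nat)
  (X V Z : normedModType R) (Y : completeNormedModType R) (ipY : Y -> Y -> R)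
  (Yk : 'I_K -> completeNormedModType R) (ipk : forall k, Yk k -> Yk k -> R)
  (res : forall k, {linear Y -> Yk k})
  (Phi : forall k, nat -> Yk k)
  (j : {linear X -> V}) (A : {linear X -> Y}) (B : {linear X -> Z})
  (f : Y) (g : Z) (ustar : V) (ustars : nat -> X) (C1 C2 : R)
  (G : forall k, set (Yk k)) (eps tau : R) (N : 'I_K -> nat)
  (NN : nat -> set X) (delta : nat -> R) (u : nat -> X) :
  injective j ->
  hilbert_space ipY ->
  (forall k, hilbert_space (ipk k)) ->
  (forall w : Y, `|w| ^+ 2 = \sum_(k < K) `|res k w| ^+ 2) ->
  (forall k, complete_orthonormal_basis (ipk k) (Phi k)) ->
  approximating_seq j A B f g ustar ustars ->
  (forall w, is_solution j A B f g w -> w = ustar) ->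
  0 < C1 -> 0 < C2 ->
  (forall v : X, C1 * `|j v| <= `|A v| + `|B v| /\ `|A v| + `|B v| <= C2 * `|v|) ->
  (forall k, compact (G k)) ->
  (forall k n, G k (res k (A (ustars n) - f))) ->
  0 < eps ->
  (forall v, tildeV res G A f v ->
     J_tau_hN ipk res Phi N A B f g tau v >= J_tau A B f g tau v - eps) ->
  1 <= tau ->
  delta @ \oo --> (0 : R) ->
  (forall n, (NN n `&` tildeV res G A f) (u n)) ->
  (forall n, J_tau_hN ipk res Phi N A B f g tau (u n) <=
     inf [set J_tau_hN ipk res Phi N A B f g tau w | w in NN n `&` tildeV res G A f]
     + delta n) ->
  forall n, `|j (u n) - ustar| <=
    Num.sqrt 2 * C1^-1 *
    Num.sqrt (J_tau_hN ipk res Phi N A B f g tau (u n) + delta n + eps).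
Proof.
move=> _ _ _ _ _ approx _ C1gt0 _ normrel _ _ eps_gt0 quadJ tau1 _ u_in quasimin n.
have tau0 : 0 <= tau by lra.
set W := J_tau_hN _ _ _ _ _ _ _ _ _ (u n).
have JleW : J_tau A B f g tau (u n) - eps <= W := quadJ (u n) (u_in n).2.
have W0 : 0 <= W by exact: J_tau_hN_ge0.
have err := dist_solution_le_residuals approx (ltW C1gt0)
  (fun v => (normrel v).1) (u n).
have resJ := residuals_le_sqrt_J_tau A B f g (u n) tau1.
have delta0 : 0 <= delta n.
  apply: inf_le_add_ge0 (quasimin n); last by exists (u n).
  by exists 0 => _ [w _ <-]; exact: J_tau_hN_ge0.
have sqrtJ : Num.sqrt (2 * J_tau A B f g tau (u n)) <=
    Num.sqrt 2 * Num.sqrt (W + delta n + eps).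
  rewrite -sqrtrM // ler_sqrt; last by rewrite mulr_ge0 //; lra.
  by rewrite ler_pM2l //; lra.
rewrite -mulrA [C1^-1 * _]mulrC mulrA ler_pdivlMr // mulrC; lra.
Qed.
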